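(* Let $(M,d)$ be a pointed metric space, let $A\subseteq \widetilde{M}$ and let $\gamma\in(0,1]$. Then $A$ is $\gamma$-cyclically monotonic if and only if there exists $f\in B_{\mathrm{Lip}_0(M)}$ such that $f(m_{x,y})\geq \gamma$ for all $(x,y)\in A$.
   Context: $(M,d)$ is a metric space with a distinguished base point $0$. $\mathrm{Lip}_0(M)$ is the real Banach space of Lipschitz functions $f\colon M\to\mathbb{R}$ with $f(0)=0$, with norm $\|f\|=\sup\{|f(x)-f(y)|/d(x,y): x\neq y\}$; $B_{\mathrm{Lip}_0(M)}$ is its closed unit ball. $\widetilde{M}=\{(x,y)\in M\times M: x\neq y\}$. For $(x,y)\in\widetilde M$, $m_{x,y}=(\delta_x-\delta_y)/d(x,y)\in\mathrm{Lip}_0(M)^*$, where $\delta_x(f)=f(x)$; thus $f(m_{x,y})=(f(x)-f(y))/d(x,y)$. For $\gamma\in(0,1]$, a set $A\subseteq\widetilde M$ is called $\gamma$-cyclically monotonic if for every finite sequence of pairs $(x_1,y_1),\dots,(x_n,y_n)\in A$, setting $y_{n+1}=y_1$, one has $\sum_{i=1}^n \min\{d(x_i,y_{i+1})-\gamma d(x_i,y_i),\, d(y_i,y_{i+1})\}\geq 0$. *)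

From Stdlib Require Import Reals.
Open Scope R_scope.

Definition is_metric {M : Type} (d : M -> M -> R) : Prop :=
  (forall x y, 0 <= d x y) /\
  (forall x y, d x y = 0 <-> x = y) /\
  (forall x y, d x y = d y x) /\
  (forall x y z, d x z <= d x y + d y z).

Definition in_Lip0_ball {M : Type} (d : M -> M -> R) (z0 : M) (f : M -> R) : Prop :=
  f z0 = 0 /\ forall x y, Rabs (f x - f y) <= d x y.

Definition eval_mol {M : Type} (d : M -> M -> R) (f : M -> R) (x y : M) : R :=
  (f x - f y) / d x y.

(* A ⊆ M~ = {(x,y) : x <> y}, A given as a relation. *)
Definition subset_tildeM {M : Type} (A : M -> M -> Prop) : Prop :=
  forall x y, A x y -> x <> y.

Definition cyc_next (n i : nat) : nat := if Nat.eqb i n then 0%nat else S i.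

Definition gamma_cyc_mon {M : Type} (d : M -> M -> R) (gamma : R)
  (A : M -> M -> Prop) : Prop :=
  forall (n : nat) (x y : nat -> M),
    (forall i, (i <= n)%nat -> A (x i) (y i)) ->
    0 <= sum_f_R0 (fun i => Rmin (d (x i) (y (cyc_next n i)) - gamma * d (x i) (y i))
                                 (d (y i) (y (cyc_next n i)))) n.

(* If f is 1-Lipschitz and f(x) - f(y) >= gamma d(x,y) on A, then each term of the
   cyclic sum is at least f(y_i) - f(y_{i+1}), and these telescope to 0 around the
   cycle.  Conversely, given cyclic monotonicity, let p(u) be the supremum of the
   gains of paths u -> y_0 ~> x_0 -> y_1 ~> x_1 -> ... ~> x_n -> z0, where each
   free jump costs its length and each pair (x_i, y_i) of A earns gamma d(x_i, y_i).
   Cyclic monotonicity, with the triangle inequality at z0, makes every closed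
   path from z0 gain at most 0, so p is finite with p(z0) = 0; p is 1-Lipschitz
   since moving the starting point only changes the first jump, and prefixing a
   path from a with the pair (a, b) gives p(b) >= gamma d(a,b) + p(a).
   Then f := -p works. *)
From Stdlib Require Import Reals Lra Lia.
Open Scope R_scope.

Lemma sum_f_R0_telescope (g : nat -> R) (n : nat) :
  sum_f_R0 (fun i => g i - g (S i)) n = g 0%nat - g (S n).
Proof. induction n as [|n IHn]; simpl; [|rewrite IHn]; ring. Qed.

Lemma sum_f_R0_cyc_next (F : nat -> nat -> R) (n : nat) :
  sum_f_R0 (fun i => F i (cyc_next n i)) n =
  sum_f_R0 (fun i => F i (S i)) n - F n (S n) + F n 0%nat.
Proof.
  unfold cyc_next; destruct n as [|n]; simpl; [ring|].
  rewrite Nat.eqb_refl.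
  rewrite (sum_eq _ (fun i => F i (S i))); [ring|].
  intros i Hi; destruct (Nat.eqb_spec i (S n)); [lia|reflexivity].
Qed.

Lemma sum_f_R0_cyc_telescope (g : nat -> R) (n : nat) :
  sum_f_R0 (fun i => g i - g (cyc_next n i)) n = 0.
Proof.
  rewrite (sum_f_R0_cyc_next (fun i j => g i - g j)), sum_f_R0_telescope; ring.
Qed.

Lemma Rle_div_r_iff (a b c : R) : 0 < c -> a <= b / c <-> a * c <= b.
Proof.
  intros Hc; split; intros H.
  - apply (Rmult_le_compat_r c) in H; [|lra].
    now unfold Rdiv in H; rewrite Rmult_assoc, Rinv_l, Rmult_1_r in H by lra.
  - apply (Rmult_le_reg_r c); [lra|].
    now unfold Rdiv; rewrite Rmult_assoc, Rinv_l, Rmult_1_r by lra.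
Qed.

Lemma lipschitz_gap_cyc_mon (M : Type) (d : M -> M -> R) (gamma : R)
    (A : M -> M -> Prop) (f : M -> R) :
  (forall x y, f x - f y <= d x y) ->
  (forall x y, A x y -> gamma * d x y <= f x - f y) ->
  gamma_cyc_mon d gamma A.
Proof.
  intros Hlip Hgap n x y Hxy.
  rewrite <- (sum_f_R0_cyc_telescope (fun i => f (y i)) n).
  apply sum_Rle; intros i Hi.
  pose proof (Hgap _ _ (Hxy i Hi)).
  pose proof (Hlip (x i) (y (cyc_next n i))).
  pose proof (Hlip (y i) (y (cyc_next n i))).
  apply Rmin_glb; lra.
Qed.

Definition scons {T : Type} (a : T) (x : nat -> T) : nat -> T :=
  fun i => match i with O => a | S j => x j end.

Section Metric.

Variables (M : Type) (d : M -> M -> R).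
Hypothesis d_metric : is_metric d.

Lemma dist_ge0 x y : 0 <= d x y.
Proof. apply d_metric. Qed.

Lemma dist_refl x : d x x = 0.
Proof. apply d_metric; reflexivity. Qed.

Lemma dist_sym x y : d x y = d y x.
Proof. apply d_metric. Qed.

Lemma dist_triangle x y z : d x z <= d x y + d y z.
Proof. apply d_metric. Qed.

Lemma dist_gt0 x y : x <> y -> 0 < d x y.
Proof.
  intros Hxy; destruct (Rle_lt_or_eq_dec _ _ (dist_ge0 x y)) as [|Hd]; [assumption|].
  now exfalso; apply Hxy, d_metric.
Qed.

Section Potential.

Variables (z0 : M) (gamma : R) (A : M -> M -> Prop).

(* The gain of the path u -> y_0 ~> x_0 -> ... -> y_(n-1) ~> x_(n-1) -> z0. *)
Fixpoint path_gain (u : M) (n : nat) (x y : nat -> M) : R :=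
  match n with
  | O => - d u z0
  | S m => - d u (y 0%nat) + gamma * d (x 0%nat) (y 0%nat)
           + path_gain (x 0%nat) m (fun i => x (S i)) (fun i => y (S i))
  end.

Definition pairs_in (n : nat) (x y : nat -> M) : Prop :=
  forall i, (i < n)%nat -> A (x i) (y i).

Definition path_gains (u : M) (v : R) : Prop :=
  exists n x y, pairs_in n x y /\ v = path_gain u n x y.

Lemma path_gain_le_dist u v n x y :
  path_gain u n x y <= d u v + path_gain v n x y.
Proof.
  rewrite (dist_sym u v).
  destruct n; simpl;
    [pose proof (dist_triangle v u z0) | pose proof (dist_triangle v u (y 0%nat))];
    lra.
Qed.

Lemma path_gain_cons a b n x y :
  path_gain b (S n) (scons a x) (scons b y) = gamma * d a b + path_gain a n x y.
Proof.
  change (path_gain b (S n) (scons a x) (scons b y))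
    with (- d b b + gamma * d a b + path_gain a n x y).
  rewrite dist_refl; ring.
Qed.

(* The last summand involves y (S m), which is not on the path; the term
   d (x m) (y (S m)) cancels it. *)
Lemma path_gain_sum u m x y :
  path_gain u (S m) x y =
  - d u (y 0%nat)
  - sum_f_R0 (fun i => d (x i) (y (S i)) - gamma * d (x i) (y i)) m
  + d (x m) (y (S m)) - d (x m) z0.
Proof.
  revert u x y; induction m as [|m IHm]; intros u x y; [simpl; ring|].
  change (path_gain u (S (S m)) x y) with
    (- d u (y 0%nat) + gamma * d (x 0%nat) (y 0%nat)
     + path_gain (x 0%nat) (S m) (fun i => x (S i)) (fun i => y (S i))).
  rewrite IHm, (decomp_sum _ (S m)) by lia; simpl; ring.
Qed.

Hypothesis A_cyc_mon : gamma_cyc_mon d gamma A.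

Lemma closed_path_gain_nonpos n x y :
  pairs_in n x y -> path_gain z0 n x y <= 0.
Proof.
  intros Hxy; destruct n as [|m]; [simpl; rewrite dist_refl; lra|].
  assert (Hcyc :
    0 <= sum_f_R0 (fun i => d (x i) (y (cyc_next m i)) - gamma * d (x i) (y i)) m).
  { eapply Rle_trans; [apply (A_cyc_mon m x y (fun i Hi => Hxy i ltac:(lia)))|].
    apply sum_Rle; intros i _; apply Rmin_l. }
  rewrite (sum_f_R0_cyc_next (fun i j => d (x i) (y j) - gamma * d (x i) (y i)))
    in Hcyc.
  rewrite path_gain_sum.
  pose proof (dist_triangle (x m) z0 (y 0%nat)); rewrite (dist_sym z0) in *.
  lra.
Qed.

Lemma path_gain_le_dist_base u n x y :
  pairs_in n x y -> path_gain u n x y <= d u z0.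
Proof.
  intros Hxy; pose proof (path_gain_le_dist u z0 n x y).
  pose proof (closed_path_gain_nonpos n x y Hxy); lra.
Qed.

Lemma path_gains_bound u : bound (path_gains u).
Proof.
  exists (d u z0); intros v (n & x & y & Hxy & ->).
  exact (path_gain_le_dist_base u n x y Hxy).
Qed.

Lemma path_gains_inhabited u : exists v, path_gains u v.
Proof.
  exists (- d u z0), 0%nat, (fun _ => u), (fun _ => u).
  split; [intros i Hi; lia | reflexivity].
Qed.

Definition potential (u : M) : R :=
  proj1_sig (completeness _ (path_gains_bound u) (path_gains_inhabited u)).

Lemma potential_lub u : is_lub (path_gains u) (potential u).
Proof. exact (proj2_sig (completeness _ (path_gains_bound u) (path_gains_inhabited u))). Qed.

Lemma path_gain_le_potential u n x y :
  pairs_in n x y -> path_gain u n x y <= potential u.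
Proof. intros Hxy; apply (proj1 (potential_lub u)); exists n, x, y; auto. Qed.

Lemma potential_le u c :
  (forall n x y, pairs_in n x y -> path_gain u n x y <= c) ->
  potential u <= c.
Proof.
  intros Hc; apply (proj2 (potential_lub u)).
  intros v (n & x & y & Hxy & ->); auto.
Qed.

Lemma potential_le_dist u v : potential u <= d u v + potential v.
Proof.
  apply potential_le; intros n x y Hxy.
  pose proof (path_gain_le_dist u v n x y).
  pose proof (path_gain_le_potential v n x y Hxy); lra.
Qed.

Lemma potential_base : potential z0 = 0.
Proof.
  apply Rle_antisym.
  - apply potential_le, closed_path_gain_nonpos.
  - assert (Hempty := path_gain_le_potential z0 0 (fun _ => z0) (fun _ => z0)
                          ltac:(intros i Hi; lia)).
    simpl in Hempty; rewrite dist_refl in Hempty; lra.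
Qed.

Lemma potential_step a b : A a b -> gamma * d a b + potential a <= potential b.
Proof.
  intros Hab.
  enough (potential a <= potential b - gamma * d a b) by lra.
  apply potential_le; intros n x y Hxy.
  assert (path_gain b (S n) (scons a x) (scons b y) <= potential b).
  { apply path_gain_le_potential; intros [|i] Hi; [exact Hab | apply Hxy; lia]. }
  pose proof (path_gain_cons a b n x y); lra.
Qed.

End Potential.

Lemma cyc_mon_exists_lipschitz_gap (z0 : M) (gamma : R) (A : M -> M -> Prop) :
  gamma_cyc_mon d gamma A ->
  exists f : M -> R, f z0 = 0 /\ (forall x y, f x - f y <= d x y) /\
    (forall x y, A x y -> gamma * d x y <= f x - f y).
Proof.
  intros Hcyc; exists (fun u => - potential z0 gamma A Hcyc u).
  split; [|split].
  - rewrite potential_base; ring.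
  - intros x y; pose proof (potential_le_dist z0 gamma A Hcyc y x).
    rewrite (dist_sym y x) in *; lra.
  - intros x y Hxy; pose proof (potential_step z0 gamma A Hcyc x y Hxy); lra.
Qed.

Lemma in_Lip0_ball_iff (z0 : M) (f : M -> R) :
  in_Lip0_ball d z0 f <-> f z0 = 0 /\ forall x y, f x - f y <= d x y.
Proof.
  split; intros [Hf0 Hlip]; split; [exact Hf0| |exact Hf0|].
  - intros x y; eapply Rle_trans; [apply Rle_abs | apply Hlip].
  - intros x y; apply Rabs_le.
    pose proof (Hlip x y); pose proof (Hlip y x); rewrite (dist_sym y x) in *; lra.
Qed.

Lemma eval_mol_ge_iff (f : M -> R) (gamma : R) x y :
  x <> y -> gamma <= eval_mol d f x y <-> gamma * d x y <= f x - f y.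
Proof. intros Hxy; apply Rle_div_r_iff, dist_gt0, Hxy. Qed.

End Metric.

Theorem proposition2p2 (M : Type) (d : M -> M -> R) (z0 : M)
  (A : M -> M -> Prop) (gamma : R) :
  is_metric d -> subset_tildeM A -> 0 < gamma <= 1 ->
  (gamma_cyc_mon d gamma A <->
   exists f : M -> R, in_Lip0_ball d z0 f /\
     forall x y, A x y -> gamma <= eval_mol d f x y).
Proof.
  intros Hd HA _; split.
  - intros Hcyc.
    destruct (cyc_mon_exists_lipschitz_gap M d Hd z0 gamma A Hcyc)
      as (f & Hf0 & Hlip & Hgap).
    exists f; split.
    + apply (in_Lip0_ball_iff M d Hd); auto.
    + intros x y Hxy; apply (eval_mol_ge_iff M d Hd); auto.
  - intros (f & Hball & Hmol).
    apply (in_Lip0_ball_iff M d Hd) in Hball as [_ Hlip].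
    apply (lipschitz_gap_cyc_mon M d gamma A f Hlip).
    intros x y Hxy; apply (eval_mol_ge_iff M d Hd); auto.
Qed.
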